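(* Let $A$ be a vector space with bilinear operations $\star,\circ$; $x\cdot y=x\star y+y\star x$, $[x,y]=x\circ y-y\circ x$. (1) If $(A,\cdot,[-,-])$ is a transposed Poisson algebra, $(A,\star)$ is Zinbiel, $(A,\circ)$ is pre-Lie, and $(-\mathcal{L}^*_{\star},\mathcal{L}^*_{\circ},A^* )$ is a representation of $(A,\cdot,[-,-])$, then $(A,\star,\circ)$ is a TZPD algebra. (2) Conversely, if $(A,\star,\circ)$ is a TZPD algebra then $(A,\cdot,[-,-])$ is a transposed Poisson algebra with representation $(-\mathcal{L}^*_{\star},\mathcal{L}^*_{\circ},A^* )$.
   Context: Finite-dimensional spaces, characteristic zero. $\mathcal{L}_\ast(x)y=x\ast y$; for linear $\rho:A\to\mathrm{End}(V)$, $\langle\rho^*(x)v^*,u\rangle=-\langle v^*,\rho(x)u\rangle$. Zinbiel: $x\star(y\star z)=(x\star y)\star z+(y\star x)\star z$. Pre-Lie: $(x\circ y)\circ z-x\circ(y\circ z)=(y\circ x)\circ z-y\circ(x\circ z)$. Transposed Poisson algebra: $(A,\cdot)$ commutative associative, $(A,[-,-])$ Lie, $2z\cdot[x,y]=[z\cdot x,y]+[x,z\cdot y]$. A representation of a transposed Poisson algebra is $(\mu,\rho,V)$ with $\mu(x\cdot y)=\mu(x)\mu(y)$, $\rho([x,y])=[\rho(x),\rho(y)]$, $2\mu(x)\rho(y)=\rho(x\cdot y)+\rho(y)\mu(x)$, $2\mu([x,y])=\rho(x)\mu(y)-\rho(y)\mu(x)$. A TZPD algebra is $(A,\star,\circ)$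 with $(A,\star)$ Zinbiel, $(A,\circ)$ pre-Lie, and for all $x,y,z$: $2y\circ(x\star z)=(x\star y+y\star x)\circ z+x\star(y\circ z)$; $2(x\circ y-y\circ x)\star z=x\star(y\circ z)-y\star(x\circ z)$; $y\circ(x\star z+z\star x)-x\circ(y\star z+z\star y)+z\star(x\circ y-y\circ x)=0$. *)

From HB Require Import structures.
From mathcomp Require Import all_boot all_order all_algebra.
Set Implicit Arguments. Unset Strict Implicit. Unset Printing Implicit Defensive.
Import GRing.Theory.
Local Open Scope ring_scope.

Section Defs.
Variables (K : fieldType) (A : vectType K).

Definition bilinear_op (op : A -> A -> A) : Prop :=
  (forall x, linear (op x)) /\ (forall y, linear (fun x => op x y)).

Definition sym_op (s : A -> A -> A) : A -> A -> A := fun x y => s x y + s y x.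
Definition skew_op (c : A -> A -> A) : A -> A -> A := fun x y => c x y - c y x.

Definition zinbiel (s : A -> A -> A) : Prop :=
  forall x y z, s x (s y z) = s (s x y) z + s (s y x) z.

Definition preLie (c : A -> A -> A) : Prop :=
  forall x y z, c (c x y) z - c x (c y z) = c (c y x) z - c y (c x z).

Definition is_TPA (m b : A -> A -> A) : Prop :=
  [/\ bilinear_op m, bilinear_op b,
      (forall x y, m x y = m y x) /\ (forall x y z, m (m x y) z = m x (m y z)),
      (forall x, b x x = 0) /\
        (forall x y z, b x (b y z) + b y (b z x) + b z (b x y) = 0) &
      forall x y z, (m z (b x y)) *+ 2 = b (m z x) y + b x (m z y)].

Definition is_TPA_rep (m b : A -> A -> A) (V : lmodType K)
  (mu rho : A -> V -> V) : Prop :=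
  [/\ (forall x, linear (mu x)) /\ (forall x, linear (rho x)),
      (forall (a : K) x y v, mu (a *: x + y) v = a *: mu x v + mu y v) /\
      (forall (a : K) x y v, rho (a *: x + y) v = a *: rho x v + rho y v),
      (forall x y v, mu (m x y) v = mu x (mu y v)) /\
      (forall x y v, rho (b x y) v = rho x (rho y v) - rho y (rho x v)),
      (forall x y v, (mu x (rho y v)) *+ 2 = rho (m x y) v + rho y (mu x v)) &
      (forall x y v, (mu (b x y) v) *+ 2 = rho x (mu y v) - rho y (mu x v))].

(* The dual space A^* = 'Hom(A, K^o), and the dual of the left multiplication
   operator L_op : <L_op^*(x) f, u> = - <f, op x u>. *)
Definition dualL (op : A -> A -> A) (x : A) (f : 'Hom(A, K^o)) : 'Hom(A, K^o) :=
  linfun (fun u : A => - f (op x u)).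

Definition negDualL (op : A -> A -> A) (x : A) (f : 'Hom(A, K^o)) : 'Hom(A, K^o) :=
  - dualL op x f.

Definition TZPD (s c : A -> A -> A) : Prop :=
  [/\ zinbiel s, preLie c,
      (forall x y z, (c y (s x z)) *+ 2 = c (s x y + s y x) z + s x (c y z)),
      (forall x y z, (s (c x y - c y x) z) *+ 2 = s x (c y z) - s y (c x z)) &
      (forall x y z, c y (s x z + s z x) - c x (s y z + s z y)
                     + s z (c x y - c y x) = 0)].

End Defs.

(* Pairing with A^* turns every axiom of the representation
   (-L^*_star, L^*_circ, A^* ) into an identity on A: multiplicativity becomes
   the Zinbiel identity, the bracket condition the pre-Lie identity, and the two
   mixed conditions the first two TZPD axioms.  Conversely, Zinbiel makes the
   symmetrized product associative and pre-Lie makes the commutator a Lie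
   bracket.  What is left is one identity valid for all bilinear star and circ:
   the defect of the transposed Poisson compatibility is a combination of the
   first two TZPD defects plus three times the third.  So, given the other
   axioms, the compatibility and the third TZPD axiom are equivalent; one
   direction divides by 3, which is where characteristic zero is used. *)

From HB Require Import structures.
From mathcomp Require Import all_boot all_order all_algebra.
From mathcomp Require Import ring.
Import GRing.Theory.
Local Open Scope ring_scope.

Section LinearAlgebra.
Context {K : fieldType} {A : vectType K}.
Implicit Types (f : 'Hom(A, K^o)).

Lemma linear_additive {V : lmodType K} {g : A -> V} :
  linear g -> forall u v, g (u + v) = g u + g v.
Proof. by case/GRing.semilinear_linear. Qed.

Lemma linear_scalable {V : lmodType K} {g : A -> V} :
  linear g -> forall (k : K) u, g (k *: u) = k *: g u.
Proof. by case/GRing.semilinear_linear. Qed.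

Lemma linear_opp {V : lmodType K} {g : A -> V} :
  linear g -> forall u, g (- u) = - g u.
Proof. by move=> Lg u; rewrite -[- u]scaleN1r linear_scalable // scaleN1r. Qed.

Lemma linear_addfun {V : lmodType K} {g h : A -> V} :
  linear g -> linear h -> linear (g \+ h).
Proof.
move=> Lg Lh k u v /=.
by rewrite (Lg k u v) (Lh k u v) scalerDr addrACA.
Qed.

Lemma linear_subfun {V : lmodType K} {g h : A -> V} :
  linear g -> linear h -> linear (g \- h).
Proof.
move=> Lg Lh k u v /=.
by rewrite (Lg k u v) (Lh k u v) scalerDr scalerN opprD addrACA.
Qed.

Section BilinearOp.
Context {op : A -> A -> A} (Lop : bilinear_op op).

Lemma bilinear_opDl u v w : op (u + v) w = op u w + op v w.
Proof. exact: (linear_additive (Lop.2 w)). Qed.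

Lemma bilinear_opDr u v w : op w (u + v) = op w u + op w v.
Proof. exact: (linear_additive (Lop.1 w)). Qed.

Lemma bilinear_opNl u w : op (- u) w = - op u w.
Proof. exact: (linear_opp (Lop.2 w)). Qed.

Lemma bilinear_opNr u w : op w (- u) = - op w u.
Proof. exact: (linear_opp (Lop.1 w)). Qed.

Lemma sym_op_bilinear : bilinear_op (sym_op op).
Proof. by split=> x; apply: linear_addfun; by [exact: Lop.1 | exact: Lop.2]. Qed.

Lemma skew_op_bilinear : bilinear_op (skew_op op).
Proof. by split=> x; apply: linear_subfun; by [exact: Lop.1 | exact: Lop.2]. Qed.

Lemma dualLE x f u : dualL op x f u = - f (op x u).
Proof.
have Lfx : linear (fun u => - f (op x u)).
  move=> k v w /=.
  by rewrite (linear_additive (Lop.1 x)) (linear_scalable (Lop.1 x))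
    linearD linearZ opprD scalerN.
exact: (lfunE (HB.pack (fun u => - f (op x u))
                 (GRing.isLinear.Build K A K^o *:%R _ Lfx))).
Qed.

Lemma negDualLE x f u : negDualL op x f u = f (op x u).
Proof. by rewrite opp_lfunE dualLE opprK. Qed.

Lemma dualL_linear x : linear (dualL op x).
Proof.
move=> k f g; apply/lfunP => u.
by rewrite add_lfunE scale_lfunE !dualLE add_lfunE scale_lfunE opprD scalerN.
Qed.

Lemma negDualL_linear x : linear (negDualL op x).
Proof.
move=> k f g; apply/lfunP => u.
by rewrite add_lfunE scale_lfunE !negDualLE add_lfunE scale_lfunE.
Qed.

Lemma dualL_linear_left (k : K) x y f :
  dualL op (k *: x + y) f = k *: dualL op x f + dualL op y f.
Proof.
apply/lfunP => u; rewrite add_lfunE scale_lfunE !dualLE.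
by rewrite (linear_additive (Lop.2 u)) (linear_scalable (Lop.2 u))
  linearD linearZ opprD scalerN.
Qed.

Lemma negDualL_linear_left (k : K) x y f :
  negDualL op (k *: x + y) f = k *: negDualL op x f + negDualL op y f.
Proof. by rewrite /negDualL dualL_linear_left opprD scalerN. Qed.

End BilinearOp.

Lemma eq_of_functionals (u v : A) : (forall f, f u = f v) -> u = v.
Proof.
move=> fuv; rewrite (coord_vbasis (memvf u)) (coord_vbasis (memvf v)).
apply: eq_bigr => i _; congr (_ *: _).
by have := fuv (linfun (coord (vbasis fullv) i : A -> K^o)); rewrite !lfunE.
Qed.

Lemma dual_defectP {g h : 'Hom(A, K^o) -> 'Hom(A, K^o)} {d : A -> A} :
  (forall f z, (g f - h f) z = f (d z)) ->
  (forall f, g f = h f) <-> (forall z, d z = 0).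
Proof.
move=> ghE; split=> [gh z | d0 f].
  by apply: eq_of_functionals => f; rewrite -ghE gh subrr linear0 zero_lfunE.
by apply/subr0_eq/lfunP => z; rewrite ghE d0 linear0 zero_lfunE.
Qed.

Lemma pchar0_mulrSn_eq0 {V : lmodType K} :
  [pchar K] =i pred0 -> forall (v : V) n, v *+ n.+1 = 0 -> v = 0.
Proof.
move=> char0 v n; rewrite -scaler_nat => /eqP.
by rewrite scaler_eq0 ((pcharf0P K).1 char0) /= => /eqP.
Qed.

End LinearAlgebra.

(* Evaluated at an arbitrary functional f, the identities below become ring
   identities in K between scalars of the form f (product of arguments). *)
Ltac expand_ops Ls Lc f :=
  rewrite /sym_op /skew_op ?mulr2n
    ?(bilinear_opDl Ls, bilinear_opDr Ls, bilinear_opNl Ls, bilinear_opNr Ls,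
      bilinear_opDl Lc, bilinear_opDr Lc, bilinear_opNl Lc, bilinear_opNr Lc,
      linearD f, linearN f, linearMn f).

Section Defects.
Context {K : fieldType} {A : vectType K}.
Implicit Types (s c m b : A -> A -> A) (x y z : A).

Definition zinbiel_defect s x y z := s (s x y) z + s (s y x) z - s x (s y z).
Definition associator c x y z := c (c x y) z - c x (c y z).
(* The defects of the three mixed axioms of [TZPD], in order; the first is
   taken right minus left, the sign in which it arises from the dual. *)
Definition tzpd_defect1 s c x y z :=
  c (sym_op s x y) z + s x (c y z) - c y (s x z) *+ 2.
Definition tzpd_defect2 s c x y z :=
  s (skew_op c x y) z *+ 2 - (s x (c y z) - s y (c x z)).
Definition tzpd_defect3 s c x y z :=
  c y (sym_op s x z) - c x (sym_op s y z) + s z (skew_op c x y).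
Definition tpa_compat_defect m b x y z :=
  m z (b x y) *+ 2 - (b (m z x) y + b x (m z y)).

Lemma sym_op_associator {s} : bilinear_op s -> forall x y z,
  sym_op s (sym_op s x y) z - sym_op s x (sym_op s y z) =
  zinbiel_defect s x y z + zinbiel_defect s x z y
  - zinbiel_defect s z x y - zinbiel_defect s z y x.
Proof.
move=> Ls x y z; apply: eq_of_functionals => f.
by rewrite /zinbiel_defect; expand_ops Ls Ls f; ring.
Qed.

Lemma skew_op_Jacobiator {c} : bilinear_op c -> forall x y z,
  skew_op c x (skew_op c y z) + skew_op c y (skew_op c z x)
  + skew_op c z (skew_op c x y) =
  (associator c y x z - associator c x y z)
  + (associator c z y x - associator c y z x)
  + (associator c x z y - associator c z x y).
Proof.
move=> Lc x y z; apply: eq_of_functionals => f.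
by rewrite /associator; expand_ops Lc Lc f; ring.
Qed.

Lemma tpa_compat_defectE {s c} : bilinear_op s -> bilinear_op c -> forall x y z,
  tpa_compat_defect (sym_op s) (skew_op c) x y z =
  tzpd_defect1 s c x y z - tzpd_defect1 s c y x z - tzpd_defect1 s c z x y
  + tzpd_defect1 s c z y x + tzpd_defect2 s c x y z
  + tzpd_defect3 s c x y z *+ 3.
Proof.
move=> Ls Lc x y z; apply: eq_of_functionals => f.
rewrite /tpa_compat_defect /tzpd_defect1 /tzpd_defect2 /tzpd_defect3.
by expand_ops Ls Lc f; ring.
Qed.

End Defects.

Section Dual.
Context {K : fieldType} {A : vectType K}.
Context {star circ : A -> A -> A}.
Hypotheses (Ls : bilinear_op star) (Lc : bilinear_op circ).

Local Notation mu := (negDualL star).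
Local Notation rho := (dualL circ).

Ltac eval_dual := rewrite ?mulr2n
  ?(negDualLE Ls, dualLE Lc, add_lfunE, opp_lfunE).

Lemma negDualL_morphE x y f z :
  (mu (sym_op star x y) f - mu x (mu y f)) z = f (zinbiel_defect star y x z).
Proof. by rewrite /zinbiel_defect; eval_dual; expand_ops Ls Lc f; ring. Qed.

Lemma dualL_bracketE x y f z :
  (rho (skew_op circ x y) f - (rho x (rho y f) - rho y (rho x f))) z =
  f (associator circ y x z - associator circ x y z).
Proof. by rewrite /associator; eval_dual; expand_ops Ls Lc f; ring. Qed.

Lemma dual_rep_mixed1E x y f z :
  (mu x (rho y f) *+ 2 - (rho (sym_op star x y) f + rho y (mu x f))) z =
  f (tzpd_defect1 star circ x y z).
Proof. by rewrite /tzpd_defect1; eval_dual; expand_ops Ls Lc f; ring. Qed.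

Lemma dual_rep_mixed2E x y f z :
  (mu (skew_op circ x y) f *+ 2 - (rho x (mu y f) - rho y (mu x f))) z =
  f (tzpd_defect2 star circ x y z).
Proof. by rewrite /tzpd_defect2; eval_dual; expand_ops Ls Lc f; ring. Qed.

End Dual.

Section TransposedZinbielPreLie.
Context {K : fieldType} {A : vectType K}.
Variables (star circ : A -> A -> A).
Hypotheses (Ls : bilinear_op star) (Lc : bilinear_op circ).

Local Notation mu := (negDualL star).
Local Notation rho := (dualL circ).

Lemma zinbiel_defect0 : zinbiel star -> forall x y z, zinbiel_defect star x y z = 0.
Proof. by move=> Z x y z; rewrite /zinbiel_defect Z subrr. Qed.

Lemma preLie_associator : preLie circ ->
  forall x y z, associator circ y x z - associator circ x y z = 0.
Proof. by move=> PL x y z; rewrite /associator PL subrr. Qed.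

Lemma TZPD_defectsP : TZPD star circ <->
  [/\ zinbiel star, preLie circ,
      forall x y z, tzpd_defect1 star circ x y z = 0,
      forall x y z, tzpd_defect2 star circ x y z = 0 &
      forall x y z, tzpd_defect3 star circ x y z = 0].
Proof.
split=> -[Z PL T1 T2 T3]; split=> // x y z.
- by rewrite /tzpd_defect1 T1 subrr.
- by rewrite /tzpd_defect2 T2 subrr.
- exact/esym/subr0_eq/T1.
- exact/subr0_eq/T2.
Qed.

Lemma TPA_of_TZPD : TZPD star circ -> is_TPA (sym_op star) (skew_op circ).
Proof.
case/TZPD_defectsP=> Z PL D1 D2 D3.
split; [exact: sym_op_bilinear | exact: skew_op_bilinear | split | split | ].
- by move=> x y; rewrite /sym_op addrC.
- move=> x y z; apply/subr0_eq.
  by rewrite (sym_op_associator Ls) !(zinbiel_defect0 Z) !subr0 addr0.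
- by move=> x; rewrite /skew_op subrr.
- move=> x y z.
  by rewrite (skew_op_Jacobiator Lc) !(preLie_associator PL) !addr0.
- move=> x y z; apply/subr0_eq.
  have := tpa_compat_defectE Ls Lc x y z.
  by rewrite !D1 D2 D3 mul0rn !subrr !addr0.
Qed.

Lemma TPA_rep_of_TZPD : TZPD star circ ->
  is_TPA_rep (sym_op star) (skew_op circ) mu rho.
Proof.
case/TZPD_defectsP=> Z PL D1 D2 _.
split.
- by split=> x; [exact: negDualL_linear | exact: dualL_linear].
- by split=> k x y f; [exact: negDualL_linear_left | exact: dualL_linear_left].
- split=> x y.
    by apply: (dual_defectP (negDualL_morphE Ls x y)).2 => z; apply: zinbiel_defect0.
  by apply: (dual_defectP (dualL_bracketE Lc x y)).2 => z; apply: preLie_associator.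
- by move=> x y; apply: (dual_defectP (dual_rep_mixed1E Ls Lc x y)).2.
- by move=> x y; apply: (dual_defectP (dual_rep_mixed2E Ls Lc x y)).2.
Qed.

Lemma TZPD_of_TPA_rep : [pchar K] =i pred0 ->
  is_TPA (sym_op star) (skew_op circ) -> zinbiel star -> preLie circ ->
  is_TPA_rep (sym_op star) (skew_op circ) mu rho -> TZPD star circ.
Proof.
move=> char0 [_ _ _ _ compat] Z PL [_ _ _ R1 R2].
have D1 x y := (dual_defectP (dual_rep_mixed1E Ls Lc x y)).1 (R1 x y).
have D2 x y := (dual_defectP (dual_rep_mixed2E Ls Lc x y)).1 (R2 x y).
apply/TZPD_defectsP; split=> // x y z.
have := tpa_compat_defectE Ls Lc x y z.
rewrite /tpa_compat_defect compat subrr !D1 D2 !subrr !add0r.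
by move/esym/(pchar0_mulrSn_eq0 char0).
Qed.

End TransposedZinbielPreLie.

Theorem mainTheorem18 (K : fieldType) (A : vectType K)
  (star circ : A -> A -> A) :
  [pchar K] =i pred0 ->
  bilinear_op star -> bilinear_op circ ->
  ((is_TPA (sym_op star) (skew_op circ) /\ zinbiel star /\ preLie circ /\
    is_TPA_rep (sym_op star) (skew_op circ) (negDualL star) (dualL circ))
     -> TZPD star circ)
  /\
  (TZPD star circ ->
     is_TPA (sym_op star) (skew_op circ) /\
     is_TPA_rep (sym_op star) (skew_op circ) (negDualL star) (dualL circ)).
Proof.
move=> char0 Ls Lc; split.
  by case=> TPA [Z [PL rep]]; exact: TZPD_of_TPA_rep.
by move=> tzpd; split; [exact: TPA_of_TZPD | exact: TPA_rep_of_TZPD].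
Qed.
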